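(* Let $S$ be a closed subspace of $\ell_\infty$ with $c_0\subseteq S$. If $S$ has weak$^*$ sequentially compact dual ball, then $S$ is not an $\ell_\infty$-Grothendieck subspace.
   Context: A Banach space $X$ has weak$^*$ sequentially compact dual ball if every sequence in the closed unit ball of $X^*$ has a $\sigma(X^*,X)$-convergent subsequence. Let $S$ be a closed subspace of $\ell_\infty$ containing $c_0$ and let $j:c_0\to S$ be the inclusion map; $j^{**}:c_0^{**}\equiv\ell_\infty\to S^{**}$ identifies $\ell_\infty$ with a subspace of $S^{**}$. A sequence $(x_n^* )$ in $S^*$ is $\sigma(S^*,\ell_\infty)$-convergent to $x^*$ if $\langle j^{**}z,x_n^*\rangle\to\langle j^{**}z,x^*\rangle$ for every $z\in\ell_\infty$. The closed subspace $S$ of $\ell_\infty$ is an $\ell_\infty$-Grothendieck subspace if $c_0\subseteq S$ and every $\sigma(S^*,S)$-convergent sequence in $S^*$ is $\sigma(S^*,\ell_\infty)$-convergent (to the same limit). *)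

From HB Require Import structures.
From mathcomp Require Import all_boot all_order all_algebra.
From mathcomp Require Import all_classical all_reals all_analysis.
Set Implicit Arguments. Unset Strict Implicit. Unset Printing Implicit Defensive.
Import Order.TTheory GRing.Theory Num.Theory.
Import numFieldNormedType.Exports.
Local Open Scope classical_set_scope.
Local Open Scope ring_scope.

Section LinfDefs.
Variable R : realType.

Definition bounded_seq (x : nat -> R) : Prop := exists M : R, forall n, `|x n| <= M.

Definition linf_norm (x : nat -> R) : R := sup (range (fun n => `|x n|)).

Definition c0 : set (nat -> R) := [set x | x @ \oo --> (0 : R)].

Definition closed_subspace_linf (S : set (nat -> R)) : Prop :=
  [/\ S `<=` bounded_seq,
      S (fun _ => 0),
      (forall x y, S x -> S y -> S (fun n => x n + y n)),
      (forall (a : R) x, S x -> S (fun n => a * x n)) &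
      (forall (xs : nat -> nat -> R) (x : nat -> R),
          (forall k, S (xs k)) -> bounded_seq x ->
          (fun k => linf_norm (fun n => xs k n - x n)) @ \oo --> (0 : R) ->
          S x)].

(* f (only its values on S matter) is an element of the dual S^*:
   a bounded linear functional on S *)
Definition is_dual (S : set (nat -> R)) (f : (nat -> R) -> R) : Prop :=
  [/\ (forall x y, S x -> S y -> f (fun n => x n + y n) = f x + f y),
      (forall (a : R) x, S x -> f (fun n => a * x n) = a * f x) &
      exists C : R, forall x, S x -> `|f x| <= C * linf_norm x].

Definition in_dual_ball (S : set (nat -> R)) (f : (nat -> R) -> R) : Prop :=
  is_dual S f /\ (forall x, S x -> `|f x| <= linf_norm x).

Definition weak_star_cvg (S : set (nat -> R))
    (fs : nat -> (nat -> R) -> R) (f : (nat -> R) -> R) : Prop :=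
  forall x, S x -> (fun k => fs k x) @ \oo --> f x.

Definition wstar_seq_compact_ball (S : set (nat -> R)) : Prop :=
  forall fs : nat -> (nat -> R) -> R,
    (forall k, in_dual_ball S (fs k)) ->
    exists phi : nat -> nat, (forall k, (phi k < phi k.+1)%N) /\
      exists f, is_dual S f /\ weak_star_cvg S (fun k => fs (phi k)) f.

Definition unitv (n : nat) : nat -> R := fun m => if m == n then 1 else 0.

(* <j^{**} z, f> for z in l_infty = c_0^{**} and f in S^*:
   j^* f = f|_{c_0} is the l_1 sequence (f e_n)_n, and z acts on it
   by the canonical duality: sum_n z_n f(e_n). *)
Definition jss_pair (z : nat -> R) (f : (nat -> R) -> R) : R :=
  limn (series (fun n => z n * f (unitv n))).

Definition linf_weak_cvg (fs : nat -> (nat -> R) -> R) (f : (nat -> R) -> R) : Prop :=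
  forall z, bounded_seq z -> (fun k => jss_pair z (fs k)) @ \oo --> jss_pair z f.

Definition linf_grothendieck (S : set (nat -> R)) : Prop :=
  c0 `<=` S /\
  forall (fs : nat -> (nat -> R) -> R) (f : (nat -> R) -> R),
    (forall k, is_dual S (fs k)) -> is_dual S f ->
    weak_star_cvg S fs f -> linf_weak_cvg fs f.

End LinfDefs.

From mathcomp Require Import all_boot all_order all_algebra.
From mathcomp Require Import all_classical all_reals all_analysis.
Import Order.TTheory GRing.Theory Num.Theory.
Import numFieldNormedType.Exports.
Local Open Scope classical_set_scope.
Local Open Scope ring_scope.

(* The coordinate functionals x |-> x_n lie in the dual ball of S, so some
   subsequence (x |-> x_(phi k))_k is weak* convergent, and the differences
   g_k := x_(phi (2k)) - x_(phi (2k+1)) converge weak* to 0.  Paired with the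
   indicator z of {phi (2j) | j} in l_infty, however, every g_k gives 1: the
   restrictions of the g_k to c_0 are e_(phi (2k)) - e_(phi (2k+1)), which
   stay at l_1-distance 2 from 0. *)

Lemma cvg_subr_even_odd (K : numFieldType) (V : normedModType K)
    (u : V ^nat) (l : V) :
  u @ \oo --> l -> (fun k => u (2 * k)%N - u (2 * k).+1) @ \oo --> 0.
Proof.
move=> u_l; rewrite -(subrr l).
have even_oo : muln 2 @ \oo --> \oo by exact: cvg_mulnl.
have odd_oo : (fun k => (2 * k).+1) @ \oo --> \oo.
  by under eq_fun do rewrite -addn1; exact: cvg_comp even_oo (cvg_addnr 1).
exact: cvgB (cvg_comp _ _ even_oo u_l) (cvg_comp _ _ odd_oo u_l).
Qed.

Lemma cvg_cst_neq (K : numFieldType) (a b : K) :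
  a != b -> ~ (fun=> a) @ \oo --> b.
Proof.
by move=> /negP ab /cvg_lim; rewrite lim_cst // => ba; apply: ab; rewrite ba.
Qed.

Lemma incr_even_odd_images_disjoint (phi : nat -> nat) :
  (forall k, (phi k < phi k.+1)%N) ->
  forall k, ~ range (fun j => phi (2 * j)%N) (phi (2 * k).+1).
Proof.
move=> phiS k [j _].
move=> /(incn_inj (leq_mono (homo_ltn ltn_trans phiS)))/(congr1 odd).
by rewrite /= !oddM.
Qed.

Section LinfDuality.
Variable R : realType.
Implicit Types (S : set (nat -> R)) (x z : nat -> R).

Lemma linf_norm_ge x n : bounded_seq x -> `|x n| <= linf_norm x.
Proof.
move=> [M xM]; apply: ub_le_sup; last by exists n.
by exists M => _ [m _ <-].
Qed.

Lemma coord_in_dual_ball S (n : nat) :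
  S `<=` @bounded_seq R -> in_dual_ball S (fun x => x n).
Proof.
move=> Sb; split; last by move=> x /Sb; exact: linf_norm_ge.
split=> //; exists 1 => x /Sb xb; rewrite mul1r; exact: linf_norm_ge.
Qed.

Lemma is_dual_coordB S (i j : nat) :
  S `<=` @bounded_seq R -> is_dual S (fun x => x i - x j).
Proof.
move=> Sb; split.
- by move=> x y _ _; rewrite opprD addrACA.
- by move=> a x _; rewrite mulrBr.
exists 2 => x /Sb xb; rewrite mulr2n mulrDl mul1r.
by rewrite (le_trans (ler_normB _ _)) // lerD // linf_norm_ge.
Qed.

Lemma is_dual0 S : is_dual S (fun=> 0).
Proof.
split=> [x y _ _|a x _|]; rewrite ?addr0 ?mulr0 //.
by exists 0 => x _; rewrite normr0 mul0r.
Qed.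

Lemma sum_mul_unitv z m N : (m < N)%N ->
  \sum_(0 <= n < N) z n * unitv R n m = z m.
Proof.
move=> mN; rewrite big_mkord (bigD1 (Ordinal mN)) //= /unitv eqxx mulr1.
rewrite big1 ?addr0 // => n /eqP nm; rewrite ifN ?mulr0 //.
by apply/eqP => mn; apply: nm; apply: val_inj.
Qed.

Lemma jss_pair_coordB z (i j : nat) :
  jss_pair z (fun x => x i - x j) = z i - z j.
Proof.
rewrite /jss_pair; apply: lim_near_cst => //.
exists (maxn i j).+1 => // n /= ijn.
rewrite /series /=; under eq_bigr do rewrite mulrBr.
by rewrite sumrB !sum_mul_unitv // (leq_trans _ ijn) // ltnS (leq_maxl, leq_maxr).
Qed.

Lemma jss_pair0 z : jss_pair z (fun=> 0) = 0.
Proof.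
by rewrite (_ : (fun=> 0) = fun x => x 0%N - x 0%N) ?jss_pair_coordB ?subrr //;
  apply: funext => x; rewrite subrr.
Qed.

Lemma bounded_indic (A : set nat) : bounded_seq (\1_A : nat -> R).
Proof.
by exists 1 => n; rewrite indicE; case: (n \in A); rewrite ?normr1 ?normr0.
Qed.

End LinfDuality.

Theorem proposition3p6 (R : realType) (S : set (nat -> R)) :
  closed_subspace_linf S -> @c0 R `<=` S ->
  wstar_seq_compact_ball S -> ~ linf_grothendieck S.
Proof.
move=> [Sb _ _ _ _] _ wsc [_ groth].
have [phi [phiS [f [_ f_lim]]]] := wsc _ (fun n => coord_in_dual_ball _ _ n Sb).
pose g k := fun x : nat -> R => x (phi (2 * k)%N) - x (phi (2 * k).+1).
have g_wstar0 : weak_star_cvg S g (fun=> 0).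
  by move=> x Sx; exact: cvg_subr_even_odd (f_lim x Sx).
pose z : nat -> R := \1_(range (fun j => phi (2 * j)%N)).
have z_even k : z (phi (2 * k)%N) = 1 by rewrite /z indicE mem_set //; exists k.
have z_odd k : z (phi (2 * k).+1) = 0.
  by rewrite /z indicE memNset //; exact: incr_even_odd_images_disjoint.
have g_pair k : jss_pair z (g k) = 1.
  by rewrite jss_pair_coordB z_even z_odd subr0.
have := groth g _ (fun k => is_dual_coordB _ _ _ _ Sb) (is_dual0 _ _) g_wstar0 z
  (bounded_indic _ _).
rewrite jss_pair0; under eq_fun do rewrite g_pair.
by apply: cvg_cst_neq; rewrite oner_eq0.
Qed.
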